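(* Let $\widetilde L$ be a standardized Laplacian matrix of order $n$, $P=\widetilde L+J$, $\widetilde L_c=K-\widetilde L$. Let $d$ be the in-forest dimension of the digraph $\Gamma$ of $\widetilde L$ and $d_c$ the in-forest dimension of the complementary digraph $\Gamma_c$. For a matrix $A$ let $m_A(\lambda)$ be the algebraic multiplicity of $\lambda$ as an eigenvalue of $A$ (zero if $\lambda\notin\operatorname{sp}A$) and $V_A(\lambda)$ the eigenspace of $A$ for $\lambda$. Then: (i) $m_{\widetilde L}(0)=d$, $m_{\widetilde L}(1)=d_c-1$; (ii) $m_P(0)=d-1$, $m_P(1)=d_c$; (iii) $m_{\widetilde L_c}(1)=d-1$, $m_{\widetilde L_c}(0)=d_c$; and each of these eigenvalues (whenever its multiplicity is positive) is semisimple; (iv) if $v\in V_{\widetilde L}(0)$ and $Kv\ne0$, then $Kv\in V_P(0)=V_{\widetilde L_c}(1)$; if $x\in V_P(1)=V_{\widetilde L_c}(0)$ and $Kx\ne0$, then $Kx\in V_{\widetilde L}(1)$.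
   Context: A standardized Laplacian matrix of order $n$ is a real $n\times n$ matrix whose row sums are all $0$ and whose off-diagonal entries are nonpositive with absolute value at most $1/n$. $J$ is the $n\times n$ matrix with all entries $1/n$, and $K=I-J$. The digraph $\Gamma$ of $\widetilde L=[\widetilde l_{ij}]$ has vertex set $\{1,\dots,n\}$ and an arc $i\to j$ ($j\ne i$) iff $\widetilde l_{ij}\ne0$; the complementary digraph $\Gamma_c$ has an arc $i\to j$ ($j\ne i$) iff $\widetilde l_{ij}\ne-1/n$ (it is the digraph of $\widetilde L_c$). A converging tree is a rooted directed tree containing a directed path from every vertex to the root; an in-forest of a digraph is a spanning subgraph whose weak components are converging trees; the in-forest dimension is the minimum number of trees in an in-forest. *)

From HB Require Import structures.
From mathcomp Require Import all_boot all_order all_algebra.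
Set Implicit Arguments. Unset Strict Implicit. Unset Printing Implicit Defensive.
Import Order.TTheory GRing.Theory Num.Theory.
Local Open Scope ring_scope.

Section Defs.
Variable R : realFieldType.
Variable n : nat.

Definition std_laplacian (L : 'M[R]_n) : Prop :=
  (forall i : 'I_n, \sum_(j < n) L i j = 0) /\
  (forall i j : 'I_n, i != j -> L i j <= 0 /\ - L i j <= (n%:R)^-1).

Definition Jmx : 'M[R]_n := const_mx (n%:R)^-1.
Definition Kmx : 'M[R]_n := 1%:M - Jmx.

Definition digraph_of (L : 'M[R]_n) : rel 'I_n := fun i j => (i != j) && (L i j != 0).
Definition cdigraph_of (L : 'M[R]_n) : rel 'I_n :=
  fun i j => (i != j) && (L i j != - (n%:R)^-1).

Definition alg_mult (A : 'M[R]_n) (a : R) : nat := mup a (char_poly A).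

(* eigenspace of A for a (column eigenvectors A v = a v), stored as the
   row space of transposed eigenvectors: rows w with w *m (A - a)^T = 0 *)
Definition col_eigenspace (A : 'M[R]_n) (a : R) := kermx (A - a%:M)^T.
Definition geom_mult (A : 'M[R]_n) (a : R) : nat := \rank (col_eigenspace A a).

Definition in_eigsp (A : 'M[R]_n) (a : R) (v : 'cV[R]_n) : bool := A *m v == a *: v.
End Defs.

Section Forest.
Variable n : nat.
Implicit Types (e : rel 'I_n) (F : {set 'I_n * 'I_n}).

Definition arcrel F : rel 'I_n := fun i j => (i, j) \in F.
Definition weakrel F : rel 'I_n := fun i j => ((i, j) \in F) || ((j, i) \in F).
Definition wcomp F (x : 'I_n) : {set 'I_n} := [set y | connect (weakrel F) x y].

(* C (a weak component of F) is a converging tree: a rooted directed tree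
   (connected, #arcs = #vertices - 1, i.e. underlying graph a tree) with a
   root r to which every vertex of C has a directed path. *)
Definition converging_tree F (C : {set 'I_n}) : bool :=
  [exists r in C, [forall y in C, connect (arcrel F) y r]] &&
  (#|[set a in F | (a.1 \in C) && (a.2 \in C)]| == #|C| - 1)%N.

Definition in_forest e F : bool :=
  [forall a in F, e a.1 a.2] && [forall x, converging_tree F (wcomp F x)].

Definition ntrees F : nat := #|[set wcomp F x | x : 'I_n]|.

(* in-forest dimension: minimum number of trees in an in-forest
   (the empty arc set is an in-forest with n trees, so n is a valid bound) *)
Definition inforest_dim e : nat := \big[minn/n]_(F | in_forest e F) ntrees F.
End Forest.

From HB Require Import structures.
From mathcomp Require Import all_boot all_order all_algebra zify.
Import Order.TTheory GRing.Theory Num.Theory.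
Set Implicit Arguments. Unset Strict Implicit. Unset Printing Implicit Defensive.
Local Open Scope ring_scope.

(* The heart of the matter is a description of the eigenvalue 0 of any
   Laplacian matrix M (zero row sums, nonpositive off-diagonal entries) in
   terms of its digraph G:
   - graph side: the in-forest dimension of G is the minimum size of a
     "reaching set", a set T of vertices into which every vertex has a path
     (roots of an in-forest form one; conversely a retraction onto T along
     shortest paths builds an in-forest with #|T| trees);
   - matrix side: by the discrete maximum principle a vector v with M v = 0
     vanishing on a reaching set is zero, so dim ker M <= #|T|; a minimum
     reaching set provides as many independent left null vectors, and the
     same principle shows M^2 v = 0 -> M v = 0, so 0 is semisimple.
   Hence 0 is a semisimple eigenvalue of M of multiplicity the in-forest
   dimension.  This is applied to M = L and to M = Lc, whose digraph is the
   complementary digraph.  Brauer's rank-one update theorem then relates the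
   spectra of L and P = L + J (one eigenvalue 0 becomes 1), the identity
   Lc = 1 - P exchanges the eigenvalues 0 and 1, and the map v |-> K v
   transfers eigenvectors and gives the remaining semisimplicity bounds. *)

Section CharPoly.
Variable F : fieldType.

Lemma char_poly_conj n (E f : 'M[F]_n) : E \in unitmx ->
  char_poly (E *m f *m invmx E) = char_poly f.
Proof.
move=> Eu; rewrite /char_poly.
have -> : char_poly_mx (E *m f *m invmx E) =
    map_mx polyC E *m char_poly_mx f *m map_mx polyC (invmx E).
  rewrite /char_poly_mx mulmxBr mulmxBl !map_mxM; congr (_ - _).
  by rewrite scalar_mxC -mulmxA -map_mxM mulmxV // map_mx1 mulmx1.
rewrite !det_mulmx mulrAC -det_mulmx -map_mxM mulmxV // map_mx1 det1.
by rewrite mul1r.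
Qed.

Lemma char_poly_trmx n (A : 'M[F]_n) : char_poly A^T = char_poly A.
Proof.
rewrite /char_poly -det_tr; congr (\det _).
by apply/matrixP => i j; rewrite !mxE eq_sym.
Qed.

Lemma char_poly_lblock k m (A : 'M[F]_k) C (B : 'M[F]_m) :
  char_poly (block_mx A 0 C B) = char_poly A * char_poly B.
Proof.
rewrite /char_poly /char_poly_mx map_block_mx map_mx0 (scalar_mx_block k m).
by rewrite opp_block_mx add_block_mx oppr0 !addr0 det_lblock.
Qed.

Lemma char_poly_scalar k (a : F) : char_poly (a%:M : 'M_k) = ('X - a%:P) ^+ k.
Proof.
rewrite /char_poly /char_poly_mx map_scalar_mx -det_scalar; congr (\det _).
by apply/matrixP => i j; rewrite !mxE mulrnBl.
Qed.

End CharPoly.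

Section EigenBlock.
Variables (F : fieldType) (k m : nat).

Lemma usubmxM n p (A : 'M[F]_(k + m, n)) (B : 'M[F]_(n, p)) :
  usubmx (A *m B) = usubmx A *m B.
Proof. by rewrite -{1}(vsubmxK A) mul_col_mx col_mxKu. Qed.

Lemma ebase_top p (U : 'M[F]_(p, k + m)) : \rank U = k ->
  (usubmx (row_ebase U) == U)%MS.
Proof.
move=> rU; set E := row_ebase U.
have UE : (U <= usubmx E)%MS.
  rewrite -{1}(mulmx_ebase U) -mulmxA -[E in pid_mx _ *m E](vsubmxK E).
  rewrite -[pid_mx _](hsubmxK (pid_mx (\rank U) : 'M[F]_(p, k + m))) mul_row_col.
  have -> : rsubmx (pid_mx (\rank U) : 'M[F]_(p, k + m)) = 0.
    apply/matrixP => i j; rewrite !mxE rU.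
    by case: eqP => //= ->; rewrite ltnNge leq_addr.
  by rewrite mul0mx addr0 mulmxA submxMl.
have rE : \rank (usubmx E) = k.
  by apply/eqP; rewrite eqn_leq rank_leq_row -{1}rU mxrankS.
have [_ UEeq] := mxrank_leqif_eq UE; rewrite rU rE eqxx in UEeq.
by move: UEeq => /esym /andP [? ?]; apply/andP.
Qed.

Variables (f E : 'M[F]_(k + m)) (a : F).
Hypotheses (E_unit : E \in unitmx) (E_eig : usubmx E *m f = a *: usubmx E).

Lemma conj_eigen_block :
  E *m f *m invmx E = block_mx a%:M 0 (dlsubmx (E *m f *m invmx E))
                                      (drsubmx (E *m f *m invmx E)).
Proof.
set M := E *m f *m invmx E; have topM : usubmx M = row_mx a%:M 0.
  rewrite /M !usubmxM E_eig -scalemxAl -(usubmxM E) mulmxV //.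
  rewrite (scalar_mx_block k m) block_mxEv col_mxKu.
  by rewrite scale_row_mx scalemx1 scaler0.
rewrite -{1}(submxK M); congr block_mx.
  by rewrite /ulsubmx topM row_mxKl.
by rewrite /ursubmx topM row_mxKr.
Qed.

Lemma char_poly_eigen_block :
  char_poly f = ('X - a%:P) ^+ k * char_poly (drsubmx (E *m f *m invmx E)).
Proof.
by rewrite -(char_poly_conj f E_unit) {1}conj_eigen_block char_poly_lblock
  char_poly_scalar.
Qed.

End EigenBlock.

Section Multiplicities.
Variable F : fieldType.

Lemma rank_eigenspace_le_mup n (f : 'M[F]_n) a :
  (\rank (kermx (f - a%:M)) <= mup a (char_poly f))%N.
Proof.
set U := kermx _; have [k rU] : exists k : nat, \rank U = k by eexists.
have /subnKC : (k <= n)%N by rewrite -rU rank_leq_row.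
move: (n - k)%N => m def_n; subst n; rewrite rU.
have Uf : U *m f = a *: U.
  apply/eqP; rewrite -subr_eq0 -mul_mx_scalar -mulmxBr; apply/eqP/sub_kermxP.
  exact: submx_refl.
have E_eig : usubmx (row_ebase U) *m f = a *: usubmx (row_ebase U).
  by case/andP: (ebase_top rU) => /submxP [X ->] _; rewrite -mulmxA Uf -scalemxAr.
rewrite mup_geq ?monic_neq0 ?char_poly_monic //.
by rewrite (char_poly_eigen_block (row_ebase_unit U) E_eig) dvdp_mulr.
Qed.

Lemma index_one_block_unit k m (f E : 'M[F]_(k + m)) :
  (forall u : 'rV_(k + m), u *m f *m f = 0 -> u *m f = 0) ->
  E \in unitmx -> (usubmx E == kermx f)%MS -> \rank (kermx f) = k ->
  drsubmx (E *m f *m invmx E) \in unitmx.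
Proof.
move=> index_one E_unit /andP [topK Ktop] rK.
have topf : usubmx E *m f = 0 by apply/sub_kermxP.
have E_eig : usubmx E *m f = 0 *: usubmx E by rewrite topf scale0r.
have top_free : row_free (usubmx E).
  by apply/eqP/anti_leq; rewrite rank_leq_row -{1}rK mxrankS.
have blockM := conj_eigen_block E_unit E_eig.
set C := dlsubmx _ in blockM; set B := drsubmx _ in blockM *.
rewrite -row_free_unit -kermx_eq0 -submx0; apply/row_subP => r; rewrite submx0.
set y := row r (kermx B); have yB : y *m B = 0 by apply/sub_kermxP/row_sub.
(* v := (0, y) E is mapped by f into the span of the kernel basis *)
pose v := row_mx (0 : 'rV_k) y *m E.
have vf : v *m f = y *m C *m usubmx E.
  have zM : row_mx 0 y *m (E *m f *m invmx E) = row_mx (y *m C) 0.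
    by rewrite blockM mul_row_block !mul0mx !add0r yB.
  have -> : v *m f = row_mx (y *m C) 0 *m E by rewrite -zM !mulmxA mulmxKV.
  by rewrite -{1}(vsubmxK E) mul_row_col mul0mx addr0.
have vf0 : v *m f = 0 by apply: index_one; rewrite vf -mulmxA topf mulmx0.
have yC0 : y *m C = 0 by apply: (row_free_inj top_free); rewrite mul0mx -vf vf0.
have /submxP [w vw] : (v <= usubmx E)%MS.
  by apply: submx_trans Ktop; apply/sub_kermxP.
have : row_mx 0 y *m E = row_mx w 0 *m E.
  by rewrite -/v vw -[in RHS](vsubmxK E) mul_row_col mul0mx addr0.
by move/(row_free_inj (etrans (row_free_unit E) E_unit)) => /eq_row_mx [_ ->].
Qed.

Lemma mup0_le_rank_kernel n (f : 'M[F]_n) :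
  (forall u : 'rV_n, u *m f *m f = 0 -> u *m f = 0) ->
  (mup 0 (char_poly f) <= \rank (kermx f))%N.
Proof.
move=> index_one; have [k rK] : exists k : nat, \rank (kermx f) = k by eexists.
have /subnKC : (k <= n)%N by rewrite -rK rank_leq_row.
move: (n - k)%N => m def_n; subst n; rewrite rK.
set E := row_ebase (kermx f); have E_unit : E \in unitmx := row_ebase_unit _.
have topK := ebase_top rK.
have E_eig : usubmx E *m f = 0 *: usubmx E.
  by rewrite scale0r; apply/sub_kermxP; case/andP: topK.
have B_unit := index_one_block_unit index_one E_unit topK rK.
rewrite (char_poly_eigen_block E_unit E_eig).
rewrite mupM ?expf_neq0 ?polyXsubC_eq0 ?monic_neq0 ?char_poly_monic //.
rewrite mup_XsubCX eqxx mupNroot ?addn0 //.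
rewrite /root horner_coef0 char_poly_det mulf_eq0 negb_or signr_eq0 /=.
by rewrite -unitfE -unitmxE.
Qed.

End Multiplicities.

Section Spectra.
Variable F : fieldType.

(* Brauer's theorem for a rank-one update: if u is a left null vector of f and
   g = f + c u fixes u, then the spectrum of g is that of f with one eigenvalue
   0 replaced by 1. *)
Lemma char_poly_rank_one_update m (f g : 'M[F]_(1 + m)) (u : 'rV_(1 + m))
    (c : 'cV_(1 + m)) :
  u != 0 -> u *m f = 0 -> u *m g = u -> g = f + c *m u ->
  'X * char_poly g = ('X - 1) * char_poly f.
Proof.
move=> u_neq0 uf ug def_g.
have ru : \rank u = 1%N by rewrite rank_rV u_neq0.
set E := row_ebase u; have E_unit : E \in unitmx := row_ebase_unit u.
have /andP [/submxP [X topX] /submxP [Y uY]] := ebase_top ru.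
have E_f : usubmx E *m f = 0 *: usubmx E by rewrite topX -mulmxA uf mulmx0 scale0r.
have E_g : usubmx E *m g = 1 *: usubmx E by rewrite topX -mulmxA ug scale1r.
have uE : u *m invmx E = row_mx Y 0.
  rewrite uY -mulmxA -usubmxM mulmxV // (scalar_mx_block 1 m) block_mxEv col_mxKu.
  by rewrite mul_mx_row mulmx1 mulmx0.
(* the update only changes the first column of the conjugated matrix *)
have same_block : drsubmx (E *m g *m invmx E) = drsubmx (E *m f *m invmx E).
  rewrite def_g mulmxDr mulmxDl.
  have -> : E *m (c *m u) *m invmx E = row_mx (E *m c *m Y) 0.
    by rewrite !mulmxA -(mulmxA _ u) uE mul_mx_row mulmx0.
  set W := E *m c *m Y.
  have -> : row_mx W 0 = block_mx (usubmx W) 0 (dsubmx W) 0 :> 'M_(1 + m).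
    by rewrite block_mxEh !vsubmxK col_mx0.
  by rewrite (conj_eigen_block E_unit E_f) add_block_mx !block_mxKdr addr0.
rewrite (char_poly_eigen_block E_unit E_g) (char_poly_eigen_block E_unit E_f).
by rewrite same_block !expr1 polyC0 polyC1 subr0 mulrCA.
Qed.

Lemma dvdp_comp1B (y : F) k p : ('X - y%:P) ^+ k %| p ->
  ('X - (1 - y)%:P) ^+ k %| (p \Po (1 - 'X)).
Proof.
case/dvdpP => r ->; rewrite comp_polyM rmorphXn /= comp_polyB comp_polyX comp_polyC.
have -> : (1 - 'X) - y%:P = - ('X - (1 - y)%:P) by rewrite opprB polyCB polyC1 addrAC.
by rewrite exprNn; apply: dvdp_mull; apply: dvdp_mull; exact: dvdpp.
Qed.

Lemma mup_comp1B (p : {poly F}) x : p != 0 -> mup x (p \Po (1 - 'X)) = mup (1 - x) p.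
Proof.
move=> p_neq0.
have sz : (1 < size ((1 - 'X)%R : {poly F}))%N by rewrite -opprB size_polyN size_XsubC.
have pq_neq0 : p \Po (1 - 'X) != 0 by rewrite comp_poly_eq0.
apply/eqP; rewrite eqn_leq; apply/andP; split.
  have : ('X - x%:P) ^+ mup x (p \Po (1 - 'X)) %| p \Po (1 - 'X) by rewrite -mup_geq.
  move/dvdp_comp1B; rewrite -comp_polyA comp_polyB comp_polyC comp_polyX subKr.
  by rewrite comp_polyXr -mup_geq.
have : ('X - (1 - x)%:P) ^+ mup (1 - x) p %| p by rewrite -mup_geq.
by move/dvdp_comp1B; rewrite subKr -mup_geq.
Qed.

Lemma char_poly_1B n (A : 'M[F]_n) :
  char_poly (1%:M - A) = (-1) ^+ n * (char_poly A \Po (1 - 'X)).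
Proof.
rewrite /char_poly -[_ \Po _](det_map_mx (comp_poly (1 - 'X))) -detZ scaleN1r.
congr (\det _); apply/matrixP => i j; rewrite !mxE.
rewrite [in RHS]rmorphB [in RHS]rmorphMn /= comp_polyX comp_polyC polyCB polyCMn.
case: (i == j) => /=; rewrite ?mulr1n ?mulr0n ?polyC0 ?polyC1.
  by rewrite !opprB addrA addrAC [in RHS]addrC.
by rewrite !sub0r opprK.
Qed.

Lemma mup_char_poly_1B n (A : 'M[F]_n) x :
  mup x (char_poly (1%:M - A)) = mup (1 - x) (char_poly A).
Proof.
rewrite char_poly_1B mupMr ?mup_comp1B ?monic_neq0 ?char_poly_monic //.
by rewrite /root !hornerE expf_eq0 oppr_eq0 oner_eq0 andbF.
Qed.

Lemma rank_kernel_transfer n (A B K : 'M[F]_n) :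
  (forall v : 'cV_n, A *m v = 0 -> B *m (K *m v) = 0) ->
  (\rank (kermx A^T) <= \rank (kermx B^T) + \rank (kermx K^T))%N.
Proof.
move=> AB; rewrite -(mxrank_mul_ker (kermx A^T) K^T) leq_add ?mxrankS ?capmxSr //.
apply/row_subP => r; apply/sub_kermxP; rewrite row_mul.
apply: trmx_inj; rewrite trmx0 !trmx_mul !trmxK; apply: AB.
apply: trmx_inj; rewrite trmx0 trmx_mul trmxK.
by apply/sub_kermxP; exact: row_sub.
Qed.

End Spectra.

Section EigenMultiplicities.
Variables (R : realFieldType) (n : nat).
Implicit Types (A : 'M[R]_n) (v : 'cV[R]_n).

Lemma geom_mult0 A : geom_mult A 0 = \rank (kermx A^T).
Proof. by rewrite /geom_mult /col_eigenspace raddf0 subr0. Qed.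

Lemma geom_mult_le_alg A a : (geom_mult A a <= alg_mult A a)%N.
Proof.
rewrite /geom_mult /alg_mult /col_eigenspace -char_poly_trmx.
by rewrite linearB /= tr_scalar_mx rank_eigenspace_le_mup.
Qed.

Lemma alg_mult0_le_geom A :
  (forall v, A *m (A *m v) = 0 -> A *m v = 0) -> (alg_mult A 0 <= geom_mult A 0)%N.
Proof.
move=> index_one; rewrite geom_mult0 /alg_mult -char_poly_trmx.
apply: mup0_le_rank_kernel => u uAA; apply: trmx_inj; rewrite trmx0 trmx_mul trmxK.
by apply: index_one; move/(congr1 trmx): uAA; rewrite !trmx_mul !trmxK trmx0.
Qed.

Lemma alg_mult_1B A x : alg_mult (1%:M - A) x = alg_mult A (1 - x).
Proof. exact: mup_char_poly_1B. Qed.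

Lemma geom_mult_1B A x : geom_mult (1%:M - A) x = geom_mult A (1 - x).
Proof.
rewrite /geom_mult /col_eigenspace !mxrank_ker !mxrank_tr.
have -> : 1%:M - A - x%:M = - (A - (1 - x)%:M) by rewrite opprB raddfB /= addrAC.
by rewrite mxrank_opp.
Qed.

Lemma in_eigsp_1B A a v : in_eigsp (1%:M - A) a v = in_eigsp A (1 - a) v.
Proof.
rewrite /in_eigsp mulmxBl mul1mx scalerBl scale1r subr_eq.
by rewrite [in RHS]eq_sym subr_eq addrC.
Qed.

End EigenMultiplicities.

Section ReachingSets.
Variable n : nat.
Implicit Types (e : rel 'I_n) (F : {set 'I_n * 'I_n}) (T : {set 'I_n}).

Definition reaching_set e T := forall x, exists2 t, t \in T & connect e x t.

Lemma in_forest_arc e F a b : in_forest e F -> arcrel F a b -> e a b.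
Proof. by case/andP => /forall_inP arcsF _ /arcsF. Qed.

Lemma in_forest_roots e F : in_forest e F ->
  exists T, reaching_set e T /\ (#|T| <= ntrees F)%N.
Proof.
move=> forestF; have /andP [_ /forallP trees] := forestF.
pose root_of (C : {set 'I_n}) := [pick r in C | [forall y in C, connect (arcrel F) y r]].
have root_ofP x : exists2 r, root_of (wcomp F x) = Some r &
    (r \in wcomp F x) && [forall y in wcomp F x, connect (arcrel F) y r].
  rewrite /root_of; case: pickP => [r ? | none]; first by exists r.
  have /andP [/exists_inP [r rC toR] _] := trees x.
  by have := none r; rewrite rC toR.
pose roots := root_of @: [set wcomp F x | x : 'I_n].
exists [set r | Some r \in roots]; split.
  move=> x; have [r xr /andP [_ /forall_inP toR]] := root_ofP x.
  exists r; first by rewrite inE -xr; apply/imset_f/imset_f.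
  apply: connect_sub (toR x _); last by rewrite inE connect0.
  by move=> a b /(in_forest_arc forestF) /connect1.
apply: leq_trans (leq_imset_card root_of _).
rewrite -(card_imset [set r | Some r \in roots] (@Some_inj _)).
by apply/subset_leq_card/subsetP => o /imsetP [r]; rewrite inE => ? ->.
Qed.

(* A retraction onto T along arcs of e, decreasing a rank function h, defines
   an in-forest whose trees are rooted at the vertices of T. *)
Section Retraction.
Variables (e : rel 'I_n) (T : {set 'I_n}) (f : 'I_n -> 'I_n) (h : 'I_n -> nat).
Hypothesis f_fix : forall t, t \in T -> f t = t.
Hypothesis f_step : forall x, x \notin T -> e x (f x) && (h (f x) < h x)%N.

Definition retraction_forest : {set 'I_n * 'I_n} := [set (x, f x) | x in ~: T].

Definition retraction_root x := iter (\max_y h y) f x.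
Local Notation root := retraction_root.

Lemma iter_fix k t : t \in T -> iter k f t = t.
Proof. by move=> tT; elim: k => //= k ->; apply: f_fix. Qed.

Lemma iter_retract k x : (h x <= k)%N -> iter k f x \in T.
Proof.
elim: k x => [|k IHk] x hx.
  apply: contraT => /f_step /andP [_].
  by rewrite ltnNge (leq_trans hx (leq0n _)).
case: (boolP (x \in T)) => [xT | xT]; first by rewrite iter_fix.
rewrite iterSr; apply: IHk; have /andP [_ hfx] := f_step xT.
by rewrite -ltnS (leq_trans hfx).
Qed.

Lemma retraction_root_in x : root x \in T.
Proof. by apply: iter_retract; exact: leq_bigmax. Qed.

Lemma retraction_root_fix t : t \in T -> root t = t.
Proof. exact: iter_fix. Qed.

Lemma retraction_root_f x : root (f x) = root x.
Proof. by rewrite /retraction_root -iterSr iterS f_fix // retraction_root_in. Qed.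

Lemma retraction_arc a b :
  ((a, b) \in retraction_forest) = (a \notin T) && (b == f a).
Proof.
apply/imsetP/andP => [[x] | [aT /eqP ->]]; last by exists a; rewrite ?inE.
by rewrite inE => xT [-> ->].
Qed.

Lemma connect_retraction_root x : connect (arcrel retraction_forest) x (root x).
Proof.
rewrite /retraction_root; elim: (\max_y h y) => [|k IHk]; first exact: connect0.
rewrite iterS; apply: connect_trans IHk _.
case: (boolP (iter k f x \in T)) => [/f_fix -> // | yT].
by apply: connect1; rewrite /arcrel retraction_arc yT eqxx.
Qed.

Lemma wcomp_retraction x : wcomp retraction_forest x = [set y | root y == root x].
Proof.
apply/setP => y; rewrite !inE; apply/idP/idP.
  have closed_root : closed (weakrel retraction_forest) [pred z | root z == root x].
    move=> a b; rewrite /weakrel !retraction_arc /=.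
    by case/orP => /andP [_ /eqP ->]; rewrite !inE retraction_root_f.
  by move/(closed_connect closed_root); rewrite !inE eqxx => <-.
move/eqP => same_root.
have arc_weak : subrel (arcrel retraction_forest) (weakrel retraction_forest).
  by move=> a b ab; apply/orP; left.
have sym : connect_sym (weakrel retraction_forest).
  by apply: sym_connect_sym => a b; rewrite /weakrel orbC.
apply: connect_trans (connect_sub _ (connect_retraction_root x)) _.
  by move=> a b /arc_weak /connect1.
rewrite -same_root sym; apply: connect_sub (connect_retraction_root y).
by move=> a b /arc_weak /connect1.
Qed.

(* Each weak component is a converging tree rooted at a vertex of T: its arcs
   are the x -> f x for x other than the root. *)
Lemma retraction_in_forest : in_forest e retraction_forest.
Proof.
apply/andP; split.
  apply/forall_inP => -[a b]; rewrite retraction_arc => /andP [aT /eqP -> /=].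
  by case/andP: (f_step aT).
apply/forallP => x; rewrite /converging_tree wcomp_retraction.
set C := [set y | root y == root x].
have rootC : root x \in C by rewrite inE retraction_root_fix ?retraction_root_in.
apply/andP; split.
  by apply/exists_inP; exists (root x) => //; apply/forall_inP => y;
    rewrite inE => /eqP <-; exact: connect_retraction_root.
have -> : [set a in retraction_forest | (a.1 \in C) && (a.2 \in C)] =
          [set (y, f y) | y in C :\ root x].
  apply/setP => -[a b]; rewrite !inE /=; apply/andP/imsetP.
    rewrite retraction_arc; case=> /andP [aT /eqP ->] /andP [aC _]; exists a => //.
    by rewrite !inE aC andbT; apply: contraNneq aT => ->; exact: retraction_root_in.
  case=> y; rewrite !inE => /andP [y_root yC] [-> ->].
  have yT : y \notin T.
    by apply: contra y_root => yT; rewrite -{1}(retraction_root_fix yT).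
  by rewrite retraction_arc yT eqxx retraction_root_f yC.
rewrite card_imset; last by move=> ? ? [].
by rewrite (cardsD1 (root x) C) rootC add1n subn1.
Qed.

Lemma retraction_ntrees : ntrees retraction_forest = #|T|.
Proof.
rewrite /ntrees -(card_in_imset (f := wcomp retraction_forest)); last first.
  move=> t t' tT t'T; rewrite !wcomp_retraction => /setP /(_ t').
  by rewrite !inE eqxx !retraction_root_fix // => /eqP.
congr #|pred_of_set _|; apply/setP => C; apply/imsetP/imsetP => [[x _ ->] | [t _ ->]].
  exists (root x); first exact: retraction_root_in.
  by rewrite !wcomp_retraction (retraction_root_fix (retraction_root_in x)).
by exists t.
Qed.

End Retraction.

(* Every reaching set admits a rank-decreasing retraction along arcs:
   rank x is the length of a shortest path from x into T. *)
Lemma reaching_retraction e T : reaching_set e T ->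
  exists f : 'I_n -> 'I_n, exists h : 'I_n -> nat,
    (forall t, t \in T -> f t = t) /\
    (forall x, x \notin T -> e x (f x) && (h (f x) < h x)%N).
Proof.
move=> reachT; pose grow (S : {set 'I_n}) := S :|: [set x | [exists y in S, e x y]].
have has_dist x : exists k, x \in iter k grow T.
  have [t tT /connectP [p pth t_last]] := reachT x; rewrite t_last in tT.
  exists (size p); clear t_last.
  elim: p x pth tT => [|y p IHp] x //= /andP [xy /IHp yin] /yin.
  by move=> y_in; rewrite !inE; apply/orP; right; apply/exists_inP; exists y.
pose h x := ex_minn (has_dist x).
have h_spec x : x \in iter (h x) grow T by rewrite /h; case: ex_minnP.
have h_min x k : x \in iter k grow T -> (h x <= k)%N.
  by rewrite /h; case: ex_minnP => m _ min_m /min_m.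
have descent x : x \notin T -> exists y, e x y && (h y < h x)%N.
  move=> xT; move: (h_spec x); case hx: (h x) => [|k] /=; first by rewrite (negbTE xT).
  rewrite inE => /orP [/h_min | ]; first by rewrite hx ltnn.
  by rewrite inE => /exists_inP [y /h_min hy xy]; exists y; rewrite xy ltnS.
pose f x := if x \in T then x else odflt x [pick y | e x y && (h y < h x)%N].
exists f, h; split => [t tT | x xT]; first by rewrite /f tT.
rewrite /f (negbTE xT); case: pickP => [y // | none].
by have [y] := descent x xT; rewrite none.
Qed.

Lemma reaching_in_forest e T : reaching_set e T ->
  exists F, in_forest e F /\ ntrees F = #|T|.
Proof.
case/reaching_retraction => f [h [f_fix f_step]].
exists (retraction_forest T f).
by rewrite (retraction_in_forest f_fix f_step) (retraction_ntrees f_fix f_step).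
Qed.

End ReachingSets.

Section InforestDim.
Variable n : nat.
Implicit Types (e : rel 'I_n) (F : {set 'I_n * 'I_n}) (T : {set 'I_n}).

Lemma in_forest_set0 e : in_forest e set0.
Proof.
apply/andP; split; first by apply/forall_inP => a; rewrite inE.
apply/forallP => x; have -> : wcomp set0 x = [set x].
  apply/setP => y; rewrite !inE; apply/idP/eqP => [|->]; last exact: connect0.
  by case/connectP => -[|z p] /=; [move=> _ -> | rewrite /weakrel !inE].
apply/andP; split.
  apply/exists_inP; exists x; first by rewrite inE.
  by apply/forall_inP => y; rewrite inE => /eqP ->; exact: connect0.
by rewrite cards1 subnn cards_eq0; apply/eqP/setP => a; rewrite !inE.
Qed.

Lemma ntrees_le F : (ntrees F <= n)%N.
Proof. by rewrite /ntrees (leq_trans (leq_imset_card _ _)) // card_ord. Qed.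

Lemma eq_inforest_dim e1 e2 : e1 =2 e2 -> inforest_dim e1 = inforest_dim e2.
Proof.
move=> e12; apply: eq_bigl => F; rewrite /in_forest; congr (_ && _).
by apply: eq_forallb => a; rewrite e12.
Qed.

(* The in-forest dimension is the minimum size of a reaching set. *)
Lemma inforest_dim_le e T : reaching_set e T -> (inforest_dim e <= #|T|)%N.
Proof.
case/reaching_in_forest => F [forestF <-].
exact: (@bigmin_le_cond _ nat _ n F (in_forest e) (@ntrees n) forestF).
Qed.

(* ... and this minimum is attained: take the roots of an optimal in-forest. *)
Lemma inforest_dim_attained e : exists2 T, reaching_set e T & #|T| = inforest_dim e.
Proof.
have [F forestF dimF] :=
  @eq_bigmin _ nat _ n set0 (in_forest e) (@ntrees n) (in_forest_set0 e)
    (fun F _ => ntrees_le F).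
have [T [reachT cardT]] := in_forest_roots forestF; exists T => //.
by apply/eqP; rewrite eqn_leq inforest_dim_le // andbT /inforest_dim dimF.
Qed.

Definition min_reaching e T :=
  reaching_set e T /\ forall T', reaching_set e T' -> (#|T| <= #|T'|)%N.

Lemma min_reaching_exists e :
  exists2 T, min_reaching e T & #|T| = inforest_dim e.
Proof.
have [T reachT cardT] := inforest_dim_attained e; exists T => //.
by split => // T' /inforest_dim_le; rewrite cardT.
Qed.

Section MinReaching.
Variables (e : rel 'I_n) (T : {set 'I_n}).
Hypothesis minT : min_reaching e T.

(* No vertex of T reaches another one: T would not be minimum. *)
Lemma min_reaching_sep t t' : t \in T -> t' \in T -> connect e t' t -> t' = t.
Proof.
move=> tT t'T t't; apply/eqP/negPn/negP => t'_neq_t.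
have : reaching_set e (T :\ t').
  move=> x; have [u uT xu] := minT.1 x; case: (eqVneq u t') => [u_t' | u_neq].
    exists t; first by rewrite !inE eq_sym t'_neq_t.
    by rewrite -u_t' in t't; exact: connect_trans xu t't.
  by exists u; rewrite ?inE ?u_neq.
by move/minT.2; rewrite (cardsD1 t' T) t'T add1n ltnn.
Qed.

Lemma min_reaching_back t x : t \in T -> connect e t x -> connect e x t.
Proof.
move=> tT tx; have [u uT xu] := minT.1 x.
by rewrite (min_reaching_sep uT tT (connect_trans tx xu)).
Qed.

Lemma min_reaching_disjoint t t' x : t \in T -> t' \in T ->
  connect e t x -> connect e t' x -> t = t'.
Proof.
move=> tT t'T tx t'x.
by rewrite (min_reaching_sep tT t'T (connect_trans t'x (min_reaching_back tT tx))).
Qed.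

End MinReaching.
End InforestDim.

Lemma row_free_witness (F : fieldType) k n (Q : 'M[F]_(k, n)) (s : 'I_k -> 'I_n) :
  (forall i, Q i (s i) != 0) -> (forall i i', i != i' -> Q i (s i') = 0) ->
  row_free Q.
Proof.
move=> Q_diag Q_off.
pose Z : 'M[F]_(n, k) := \matrix_(j, i) (if j == s i then (Q i j)^-1 else 0).
have QZ : Q *m Z = 1%:M.
  apply/matrixP => i i'; rewrite !mxE (bigD1 (s i')) //= !mxE eqxx big1 ?addr0.
    case: (eqVneq i i') => [<- | ii']; first by rewrite mulfV.
    by rewrite Q_off // mul0r.
  by move=> j /negbTE j_neq; rewrite !mxE j_neq mulr0.
rewrite /row_free eqn_leq rank_leq_row /=.
by rewrite -{1}(mxrank1 F k) -QZ mxrankM_maxl.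
Qed.

Section Laplacian.
Variables (R : realFieldType) (n : nat).

Definition laplacian (L : 'M[R]_n) :=
  (forall i, \sum_j L i j = 0) /\ (forall i j, i != j -> L i j <= 0).

Variable L : 'M[R]_n.
Hypothesis lapL : laplacian L.
Local Notation e := (digraph_of L).
Implicit Types (v w : 'cV[R]_n) (S T : {set 'I_n}).

Definition out_closed S := forall i j, i \in S -> e i j -> j \in S.

Lemma out_closed_reach t : out_closed [set x | connect e t x].
Proof. by move=> x y; rewrite !inE => tx xy; apply: connect_trans tx (connect1 xy). Qed.

Lemma lap_row v i : (L *m v) i 0 = \sum_(j | j != i) L i j * (v j 0 - v i 0).
Proof.
rewrite mxE; have -> : \sum_j L i j * v j 0 = \sum_j L i j * (v j 0 - v i 0).
  under [RHS]eq_bigr do rewrite mulrBr.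
  by rewrite sumrB -mulr_suml lapL.1 mul0r subr0.
by rewrite (bigD1 i) //= subrr mulr0 add0r.
Qed.

Lemma lap_term_ge0 S v i : out_closed S -> i \in S ->
  (forall j, j \in S -> v j 0 <= v i 0) ->
  forall j, j != i -> 0 <= L i j * (v j 0 - v i 0).
Proof.
move=> closedS iS i_max j ji; have [-> | Lij] := eqVneq (L i j) 0; first by rewrite mul0r.
have jS : j \in S by apply: (closedS i) => //; rewrite /digraph_of eq_sym ji Lij.
by apply: mulr_le0; [apply: lapL.2; rewrite eq_sym | rewrite subr_le0 i_max].
Qed.

Lemma lap_ge0_at_max S v i : out_closed S -> i \in S ->
  (forall j, j \in S -> v j 0 <= v i 0) -> 0 <= (L *m v) i 0.
Proof.
move=> closedS iS i_max; rewrite lap_row; apply: sumr_ge0 => j ji.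
exact: (lap_term_ge0 closedS iS i_max).
Qed.

Lemma lap_flat_at_max S v i : out_closed S -> i \in S ->
  (forall j, j \in S -> v j 0 <= v i 0) -> (L *m v) i 0 <= 0 ->
  forall j, e i j -> v j 0 = v i 0.
Proof.
move=> closedS iS i_max Lv_le0 j /andP [ij Lij].
have : (L *m v) i 0 == 0 by rewrite eq_le Lv_le0 (lap_ge0_at_max closedS iS i_max).
rewrite lap_row psumr_eq0; last by move=> k; apply: (lap_term_ge0 closedS iS i_max).
move/allP => /(_ j (mem_index_enum _)); rewrite eq_sym ij /= mulf_eq0 (negbTE Lij).
by rewrite subr_eq0 => /eqP.
Qed.

Lemma max_principle S w a : L *m w = 0 -> out_closed S -> a \in S ->
  (forall j, j \in S -> w j 0 <= w a 0) -> forall y, connect e a y -> w y 0 = w a 0.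
Proof.
move=> harm_w closedS aS a_max _ /connectP [p pth ->].
elim: p a aS a_max pth => [|y p IHp] x xS x_max //= /andP [xy pth].
have yS : y \in S := closedS x y xS xy.
have wy : w y 0 = w x 0.
  by apply: (lap_flat_at_max closedS xS x_max) xy; rewrite harm_w mxE.
by rewrite -wy; apply: IHp => // j /x_max; rewrite wy.
Qed.

Lemma exists_max S (g : 'I_n -> R) s : s \in S ->
  exists2 i, i \in S & forall j, j \in S -> g j <= g i.
Proof. by move=> sS; case: (@arg_maxP _ _ _ s (mem S) g sS) => i; exists i. Qed.

Lemma harmonic_le0 w T : L *m w = 0 -> reaching_set e T ->
  (forall t, t \in T -> w t 0 = 0) -> forall x, w x 0 <= 0.
Proof.
move=> harm_w reachT wT x; have [a _ a_max] := exists_max (fun i => w i 0) (in_setT x).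
have [t tT at_] := reachT a.
have closedT : out_closed setT by move=> i j; rewrite !inE.
rewrite (le_trans (a_max x _)) ?inE //.
by rewrite -(max_principle harm_w closedT _ a_max at_) ?inE ?wT.
Qed.

Lemma harmonic_vanishing w T : L *m w = 0 -> reaching_set e T ->
  (forall t, t \in T -> w t 0 = 0) -> w = 0.
Proof.
move=> harm_w reachT wT; apply/matrixP => x k; rewrite (ord1 k) mxE.
apply/eqP; rewrite eq_le (harmonic_le0 harm_w reachT wT) /= -oppr_le0.
have harm_Nw : L *m - w = 0 by rewrite mulmxN harm_w oppr0.
have Nw_T t : t \in T -> (- w) t 0 = 0 by move=> tT; rewrite mxE wT ?oppr0.
by have := harmonic_le0 harm_Nw reachT Nw_T x; rewrite mxE.
Qed.

Lemma harmonic_const w S t : L *m w = 0 -> out_closed S -> t \in S ->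
  (forall x, x \in S -> connect e x t) -> forall x, x \in S -> w x 0 = w t 0.
Proof.
move=> harm_w closedS tS back x xS.
have [a aS a_max] := exists_max (fun i => w i 0) tS.
have [b bS b_max] := exists_max (fun i => - w i 0) tS.
have harm_Nw : L *m - w = 0 by rewrite mulmxN harm_w oppr0.
have wa : w t 0 = w a 0 := max_principle harm_w closedS aS a_max (back a aS).
have wb : - w t 0 = - w b 0.
  have Nb_max j : j \in S -> (- w) j 0 <= (- w) b 0 by rewrite !mxE; apply: b_max.
  by have := max_principle harm_Nw closedS bS Nb_max (back b bS); rewrite !mxE.
apply/eqP; rewrite eq_le; apply/andP; split; first by rewrite wa a_max.
by rewrite -lerN2 wb b_max.
Qed.

(* Index one: L^2 v = 0 implies L v = 0.  On each closed class reached from a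
   vertex of a minimum reaching set, L v is a constant which is >= 0 at a
   maximum of v and <= 0 at a minimum of v. *)
Lemma lap_index_one v : L *m (L *m v) = 0 -> L *m v = 0.
Proof.
move=> harm_Lv; have [T minT _] := min_reaching_exists e.
apply: (harmonic_vanishing harm_Lv minT.1) => t tT.
have tS : t \in [set x | connect e t x] by rewrite inE connect0.
have back x : x \in [set x | connect e t x] -> connect e x t.
  by rewrite inE; exact: (min_reaching_back minT tT).
have const := harmonic_const harm_Lv (@out_closed_reach t) tS back.
have [i iS i_max] := exists_max (fun i => v i 0) tS.
have [i' i'S i'_max] := exists_max (fun i => - v i 0) tS.
have Lv_ge0 := lap_ge0_at_max (@out_closed_reach t) iS i_max.
have LNv_ge0 : 0 <= (L *m - v) i' 0.
  by apply: lap_ge0_at_max (@out_closed_reach t) i'S _ => j jS; rewrite !mxE i'_max.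
rewrite mulmxN mxE oppr_ge0 in LNv_ge0.
by apply/eqP; rewrite eq_le -{1}(const i' i'S) LNv_ge0 -(const i iS) Lv_ge0.
Qed.

(* Every closed set S carries a nonzero left null vector of L supported in S:
   the principal submatrix of L on S has zero row sums, hence is singular. *)
Lemma left_null_on_closed S s : out_closed S -> s \in S ->
  exists p : 'rV[R]_n,
    [&& p != 0, p *m L == 0 & [forall j, (p 0 j != 0) ==> (j \in S)]].
Proof.
move=> closedS sS.
have L_out i j : i \in S -> j \notin S -> L i j = 0.
  move=> iS jS; have ij : i != j by apply: contraNneq jS => <-.
  apply/eqP/negPn/negP => Lij; case/negP: jS; apply: (closedS i) iS _.
  by rewrite /digraph_of ij Lij.
(* L on S, completed by the identity outside S, kills the indicator of S *)
pose N : 'M[R]_n :=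
  \matrix_(i, j) (if i \in S then (j \in S)%:R * L i j else (i == j)%:R).
pose c : 'cV[R]_n := \col_j (j \in S)%:R.
have Nc : N *m c = 0.
  apply/matrixP => i k; rewrite !mxE; case: (boolP (i \in S)) => iS.
    rewrite -[RHS](lapL.1 i); apply: eq_bigr => j _; rewrite !mxE iS.
    by case: (boolP (j \in S)) => jS; rewrite ?mul1r ?mulr1 // mul0r mulr0 L_out.
  rewrite (bigD1 i) //= big1 => [|j ji]; rewrite !mxE (negbTE iS).
    by rewrite eqxx mulr0 addr0.
  by rewrite eq_sym (negbTE ji) mul0r.
have c_neq0 : c != 0.
  by apply/eqP => /matrixP /(_ s 0); rewrite !mxE sS => /eqP; rewrite oner_eq0.
have : ~~ (kermx N <= (0 : 'M[R]_n))%MS.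
  rewrite submx0 kermx_eq0 row_free_unit; apply: contra c_neq0 => N_unit.
  by rewrite -(mulKmx N_unit c) Nc mulmx0.
case/row_subPn => r; rewrite submx0; set p := row r _ => p_neq0.
have pN : p *m N = 0 by apply/sub_kermxP; exact: row_sub.
clearbody p.
have p_supp j : j \notin S -> p 0 j = 0.
  move=> jS; have pNj : (p *m N) 0 j = p 0 j.
    rewrite mxE (bigD1 j) //= big1 ?addr0 => [|i ij]; rewrite !mxE.
      by rewrite (negbTE jS) eqxx mulr1.
    by case: (i \in S); rewrite ?(negbTE jS) ?(negbTE ij) ?mul0r ?mulr0.
  by rewrite -pNj pN mxE.
have pL : p *m L = p *m N.
  apply/rowP => k; rewrite !mxE; apply: eq_bigr => i _; rewrite !mxE.
  case: (boolP (i \in S)) => iS; last by rewrite p_supp ?mul0r.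
  case: (boolP (k \in S)) => kS; first by rewrite mul1r.
  by rewrite L_out // mul0r mulr0.
exists p; rewrite p_neq0 pL pN eqxx /=; apply/forallP => j; apply/implyP.
by case: (boolP (j \in S)) => // /p_supp ->; rewrite eqxx.
Qed.

(* The kernel of L has dimension at most the size of any reaching set T:
   restricting harmonic vectors to T is injective. *)
Lemma rank_kernel_le_reaching T : reaching_set e T -> (\rank (kermx L^T) <= #|T|)%N.
Proof.
move=> reachT; set K := kermx L^T.
pose Sel : 'M[R]_(n, #|T|) := \matrix_(j, k) (j == enum_val k)%:R.
have K_Sel : (K :&: kermx Sel)%MS = 0.
  apply/eqP; rewrite -submx0; apply/row_subP => r; rewrite submx0.
  set u := row r _.
  have uK : u *m L^T = 0.
    by apply/sub_kermxP; exact: submx_trans (row_sub r _) (capmxSl _ _).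
  have uSel : u *m Sel = 0.
    by apply/sub_kermxP; exact: submx_trans (row_sub r _) (capmxSr _ _).
  clearbody u; have harm_u : L *m u^T = 0.
    by apply: trmx_inj; rewrite trmx_mul trmxK trmx0.
  rewrite -[u]trmxK (harmonic_vanishing harm_u reachT) ?trmx0 // => t tT.
  move/matrixP: uSel => /(_ 0 (enum_rank_in tT t)); rewrite !mxE => <-.
  rewrite (bigD1 t) //= big1 ?addr0 => [|j jt]; rewrite !mxE (enum_rankK_in tT tT).
    by rewrite eqxx mulr1.
  by rewrite (negbTE jt) mulr0.
have := mxrank_mul_ker K Sel; rewrite K_Sel mxrank0 addn0 => <-.
exact: rank_leq_col.
Qed.

(* Conversely, a minimum reaching set T yields #|T| independent left null
   vectors, one supported on the vertices reachable from each t in T. *)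
Lemma rank_kernel_ge_min_reaching T : min_reaching e T -> (#|T| <= \rank (kermx L))%N.
Proof.
move=> minT.
have null t : exists p : 'rV[R]_n, [&& p != 0, p *m L == 0 &
    [forall j, (p 0 j != 0) ==> (j \in [set x | connect e t x])]].
  have tS : t \in [set x | connect e t x] by rewrite inE connect0.
  exact: left_null_on_closed (@out_closed_reach t) tS.
pose p t := xchoose (null t).
have pL t : p t *m L = 0 by case/and3P: (xchooseP (null t)) => _ /eqP.
have p_reach t j : p t 0 j != 0 -> connect e t j.
  case/and3P: (xchooseP (null t)) => _ _ /forallP /(_ j) /implyP supp /supp.
  by rewrite inE.
pose s t := odflt t [pick j | p t 0 j != 0].
have s_wit t : p t 0 (s t) != 0.
  rewrite /s; case: pickP => [j // | none].
  case/and3P: (xchooseP (null t)) => /eqP p_neq0 _ _; case: p_neq0.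
  by apply/rowP => j; rewrite mxE; apply/eqP/negbFE/none.
pose Q : 'M[R]_(#|T|, n) := \matrix_(k, j) p (enum_val k) 0 j.
have Q_free : row_free Q.
  apply: (@row_free_witness _ _ _ Q (fun k => s (enum_val k))) => [k | k k' kk'].
    by rewrite mxE.
  rewrite mxE; apply/eqP/negPn/negP => nz; case/negP: kk'; apply/eqP/enum_val_inj.
  exact: (min_reaching_disjoint minT (enum_valP k) (enum_valP k') (p_reach _ _ nz)
    (p_reach _ _ (s_wit _))).
have QK : (Q <= kermx L)%MS.
  apply/row_subP => k; apply/sub_kermxP.
  by have -> : row k Q = p (enum_val k) by apply/rowP => j; rewrite !mxE.
by rewrite -{1}(eqP Q_free) mxrankS.
Qed.

Lemma laplacian_kernel_rank : \rank (kermx L^T) = inforest_dim e.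
Proof.
have [T minT <-] := min_reaching_exists e.
apply/eqP; rewrite eqn_leq (rank_kernel_le_reaching minT.1) /=.
by rewrite mxrank_ker mxrank_tr -mxrank_ker (rank_kernel_ge_min_reaching minT).
Qed.

Lemma laplacian_mult0 :
  geom_mult L 0 = inforest_dim e /\ alg_mult L 0 = inforest_dim e.
Proof.
have geom_dim : geom_mult L 0 = inforest_dim e.
  by rewrite geom_mult0 laplacian_kernel_rank.
split => //; apply/eqP; rewrite -geom_dim eqn_leq geom_mult_le_alg andbT.
exact/alg_mult0_le_geom/lap_index_one.
Qed.

End Laplacian.

Section StandardizedLaplacian.
Variables (R : realFieldType) (n : nat) (L : 'M[R]_n).

Lemma natr_neq0 : (0 < n)%N -> (n%:R : R) != 0.
Proof. by move=> n_gt0; rewrite pnatr_eq0 -lt0n. Qed.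

Lemma std_laplacian_laplacian : std_laplacian L -> laplacian L.
Proof. by case=> rows offdiag; split => // i j /offdiag []. Qed.

Lemma std_laplacian_complement :
  (0 < n)%N -> std_laplacian L -> laplacian (Kmx R n - L).
Proof.
move=> n_gt0 [rows offdiag]; split => [i | i j ij].
  under eq_bigr do rewrite !mxE.
  rewrite sumrB rows subr0 sumrB sumr_const card_ord -[_ *+ n]mulr_natr.
  rewrite mulVf ?natr_neq0 // (bigD1 i) //= eqxx big1 ?addr0 ?subrr // => j.
  by rewrite eq_sym => /negbTE ->.
have [_ L_ge] := offdiag i j ij.
by rewrite !mxE (negbTE ij) mulr0n sub0r subr_le0 lerNl.
Qed.

Lemma digraph_complement : digraph_of (Kmx R n - L) =2 cdigraph_of L.
Proof.
move=> i j; rewrite /digraph_of /cdigraph_of; case: eqVneq => //= ij.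
by rewrite !mxE (negbTE ij) mulr0n sub0r subr_eq0 eq_sym.
Qed.

End StandardizedLaplacian.

(* Adding J to a matrix with zero row sums is a rank-one update fixing the
   all-ones vector: it turns one eigenvalue 0 into 1, and K transports the
   relevant eigenvectors back. *)
Section RankOneUpdate.
Variables (R : realFieldType) (n : nat) (L : 'M[R]_n).
Hypotheses (n_gt0 : (0 < n)%N) (rows0 : forall i, \sum_j L i j = 0).
Local Notation J := (Jmx R n).
Local Notation K := (Kmx R n).
Local Notation P := (L + J).

Lemma J_idem : J *m J = J.
Proof.
apply/matrixP => i k; rewrite !mxE; under eq_bigr do rewrite !mxE.
by rewrite sumr_const card_ord -[_ *+ n]mulr_natr -mulrA mulVf ?natr_neq0 ?mulr1.
Qed.

Lemma mul_L_J : L *m J = 0.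
Proof.
apply/matrixP => i k; rewrite !mxE; under eq_bigr do rewrite mxE.
by rewrite -mulr_suml rows0 mul0r.
Qed.

Lemma mul_L_K : L *m K = L.
Proof. by rewrite mulmxBr mulmx1 mul_L_J subr0. Qed.

Lemma mul_P_K : P *m K = L.
Proof. by rewrite mulmxDl mul_L_K mulmxBr mulmx1 J_idem subrr addr0. Qed.

(* Brauer's theorem applied to the transposes: the all-ones row vector u is a
   left null vector of L^T fixed by P^T, and P^T = L^T + (1/n) u^T u. *)
Lemma char_poly_add_J : 'X * char_poly P = ('X - 1) * char_poly L.
Proof.
case: n L n_gt0 rows0 => [//|m] A _ A_rows.
rewrite -char_poly_trmx -[char_poly A]char_poly_trmx.
apply: (@char_poly_rank_one_update _ m _ _ (const_mx 1) (const_mx (m.+1%:R^-1))).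
- by apply/eqP => /matrixP /(_ 0 0); rewrite !mxE => /eqP; rewrite oner_eq0.
- apply/matrixP => a j; rewrite !mxE; under eq_bigr do rewrite !mxE mul1r.
  exact: A_rows.
- apply/matrixP => a j; rewrite !mxE; under eq_bigr do rewrite !mxE mul1r.
  rewrite big_split /= A_rows add0r sumr_const card_ord.
  by rewrite -[_ *+ _]mulr_natr mulVf ?natr_neq0.
- by apply/matrixP => i j; rewrite !mxE big_ord1 !mxE mulr1.
Qed.

Lemma alg_mult_add_J :
  (alg_mult P 0).+1 = alg_mult L 0 /\ alg_mult P 1 = (alg_mult L 1).+1.
Proof.
have mupXB x c (q : {poly R}) : q != 0 ->
    mup x (('X - c%:P) * q) = ((c == x) : nat) + mup x q.
  by move=> q_neq0; rewrite mupM ?polyXsubC_eq0 // -['X - _]expr1 mup_XsubCX.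
have mult x : mup x (('X - 0%:P) * char_poly P) = mup x (('X - 1%:P) * char_poly L).
  by rewrite polyC0 subr0 polyC1 char_poly_add_J.
rewrite /alg_mult; move: (mult 0) (mult 1).
rewrite !mupXB ?monic_neq0 ?char_poly_monic // !eqxx [0 == 1]eq_sym oner_eq0 /=.
by move=> h0 h1; split.
Qed.

Lemma rank_kernel_K : (\rank (kermx K^T) <= 1)%N.
Proof.
apply: leq_trans (mxrankS _) (rank_leq_row (const_mx 1 : 'rV[R]_n)).
apply/row_subP => r; set w := row r _.
have wK : w *m K^T = 0 by apply/sub_kermxP; exact: row_sub.
clearbody w; apply/sub_rVP; exists (\sum_j w 0 j * n%:R^-1); apply/rowP => j.
move/matrixP: wK => /(_ 0 j); rewrite !mxE; under eq_bigr do rewrite !mxE mulrBr.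
rewrite sumrB (bigD1 j) //= eqxx mulr1 big1 ?addr0 => [|i ij]; last first.
  by rewrite eq_sym (negbTE ij) mulr0.
by move/eqP; rewrite subr_eq0 mulr1 => /eqP.
Qed.

(* K maps ker L into ker P and ker (P - 1) into ker (L - 1), with a kernel of
   dimension at most 1; this bounds the geometric multiplicities. *)
Lemma geom_mult_add_J :
  (geom_mult L 0 <= (geom_mult P 0).+1)%N /\ (geom_mult P 1 <= (geom_mult L 1).+1)%N.
Proof.
split; rewrite ?geom_mult0 /geom_mult /col_eigenspace -addn1.
  apply: leq_trans (rank_kernel_transfer _) (leq_add (leqnn _) rank_kernel_K).
  by move=> v Lv; rewrite mulmxA mul_P_K.
apply: leq_trans (rank_kernel_transfer _) (leq_add (leqnn _) rank_kernel_K).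
by move=> v Pv; rewrite mulmxA mulmxBl mul_L_K mul1mx /Kmx opprB addrA.
Qed.

Lemma eigenvectors_add_J :
  (forall v, in_eigsp L 0 v -> in_eigsp P 0 (K *m v)) /\
  (forall x, in_eigsp P 1 x -> in_eigsp L 1 (K *m x)).
Proof.
split => [v | x]; rewrite /in_eigsp ?scale0r ?scale1r; first by rewrite mulmxA mul_P_K.
rewrite mulmxDl => /eqP Px; rewrite mulmxA mul_L_K /Kmx mulmxBl mul1mx.
by rewrite -{2}Px addrK.
Qed.

End RankOneUpdate.

Theorem theorem7 (R : realFieldType) (n : nat) (L : 'M[R]_n) :
  (0 < n)%N -> std_laplacian L ->
  let P := L + Jmx R n in
  let Lc := Kmx R n - L in
  let d := inforest_dim (digraph_of L) in
  let dc := inforest_dim (cdigraph_of L) in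
  [/\ (* (i) *) alg_mult L 0 = d /\ alg_mult L 1 = (dc - 1)%N,
      (* (ii) *) alg_mult P 0 = (d - 1)%N /\ alg_mult P 1 = dc,
      (* (iii) *) alg_mult Lc 1 = (d - 1)%N /\ alg_mult Lc 0 = dc,
      (* semisimplicity: geometric multiplicity = algebraic multiplicity *)
      [/\ geom_mult L 0 = alg_mult L 0, geom_mult L 1 = alg_mult L 1,
          geom_mult P 0 = alg_mult P 0, geom_mult P 1 = alg_mult P 1 &
          geom_mult Lc 1 = alg_mult Lc 1 /\ geom_mult Lc 0 = alg_mult Lc 0] &
      (* (iv) *)
      [/\ forall v : 'cV[R]_n, in_eigsp P 0 v = in_eigsp Lc 1 v,
          forall v : 'cV[R]_n, in_eigsp P 1 v = in_eigsp Lc 0 v,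
          forall v : 'cV[R]_n, in_eigsp L 0 v -> Kmx R n *m v != 0 ->
             in_eigsp P 0 (Kmx R n *m v) &
          forall x : 'cV[R]_n, in_eigsp P 1 x -> Kmx R n *m x != 0 ->
             in_eigsp L 1 (Kmx R n *m x)]].
Proof.
move=> n_gt0 stdL P Lc d dc.
have lapL := std_laplacian_laplacian stdL.
have [gL0 aL0] := laplacian_mult0 lapL; rewrite -/d in gL0 aL0.
have [gLc0 aLc0] := laplacian_mult0 (std_laplacian_complement n_gt0 stdL).
rewrite (eq_inforest_dim (digraph_complement L)) -/Lc -/dc in gLc0 aLc0.
have Lc_P : Lc = 1%:M - P by rewrite /Lc /P /Kmx opprD addrA addrAC.
have aLc1 : alg_mult Lc 1 = alg_mult P 0 by rewrite Lc_P alg_mult_1B subrr.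
have aLc0' : alg_mult Lc 0 = alg_mult P 1 by rewrite Lc_P alg_mult_1B subr0.
have gLc1 : geom_mult Lc 1 = geom_mult P 0 by rewrite Lc_P geom_mult_1B subrr.
have gLc0' : geom_mult Lc 0 = geom_mult P 1 by rewrite Lc_P geom_mult_1B subr0.
have [aP0 aP1] := alg_mult_add_J n_gt0 lapL.1.
have [gP0 gP1] := geom_mult_add_J n_gt0 lapL.1.
have [eigP0 eigL1] := eigenvectors_add_J n_gt0 lapL.1.
rewrite -/P in aP0 aP1 gP0 gP1 eigP0 eigL1.
have gP0_le := geom_mult_le_alg P 0; have gL1_le := geom_mult_le_alg L 1.
split; [lia | lia | lia | split; lia | split => [v | v | v Lv _ | x Px _]].
- by rewrite Lc_P in_eigsp_1B subrr.
- by rewrite Lc_P in_eigsp_1B subr0.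
- exact: eigP0.
- exact: eigL1.
Qed.
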